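(* For fixed $0<r<1$, as $n\to\infty$, $$\sum_{j}P_{n,r}(j)\Big(\frac{2j}{n}-r\Big)^2=\frac{1-r^2}{n}-\frac{2(1-r)}{r}\,\frac1{n^2}+O(\gamma^n)$$ for some $\gamma\in(0,1)$ depending only on $r$, where the sum runs over $j\in\{n/2,n/2-1,\dots\}$, $j\ge0$.
   Context: For $n\ge1$ and $0\le r<1$, $P_{n,r}$ is the probability distribution on $j\in\{n/2,n/2-1,\dots\}\cap[0,\infty)$ given by $$P_{n,r}(j)=\Big(\binom{n}{n/2-j}-\binom{n}{n/2-j-1}\Big)\sum_{m=-j}^{j}\Big(\frac{1-r}{2}\Big)^{n/2-m}\Big(\frac{1+r}{2}\Big)^{n/2+m},$$ with $\binom{n}{-1}=0$. (It is the distribution of the total-spin label $j$ obtained by projecting $\rho^{\otimes n}$, for a qubit state $\rho$ with Bloch vector of length $r$, onto the isotypic components of the $SU(2)$ decomposition of $(\mathbb{C}^2)^{\otimes n}$.) *)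

From mathcomp Require Import all_boot all_order all_algebra.
From mathcomp Require Import reals.
Set Implicit Arguments. Unset Strict Implicit. Unset Printing Implicit Defensive.
Import Order.TTheory GRing.Theory Num.Theory.
Local Open Scope ring_scope.

(* The spin label j in {n/2, n/2-1, ...} /\ [0,oo) is encoded by the natural
   number k = n/2 - j, with 0 <= k <= n./2 (so 2j = n - 2k).
   binom(n, n/2-j-1) = binom(n, k-1), which is 0 when k = 0. *)
Definition binom_m1 (R : realType) (n k : nat) : R :=
  if k is k'.+1 then ('C(n, k'))%:R else 0.

(* P_{n,r}(j) with j = n/2 - k.  The inner sum over m = -j..j is reindexed by
   l = n/2 - m, which ranges over k..n-k, with n/2 + m = n - l. *)
Definition Pnr (R : realType) (n : nat) (r : R) (k : nat) : R :=
  (('C(n, k))%:R - binom_m1 R n k) *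
  \sum_(k <= l < (n - k).+1) ((1 - r) / 2) ^+ l * ((1 + r) / 2) ^+ (n - l).

Definition twoj_over_n (R : realType) (n k : nat) : R :=
  ((n - 2 * k)%N)%:R / n%:R.

Definition sqdev (R : realType) (n : nat) (r : R) : R :=
  \sum_(0 <= k < (n./2).+1) Pnr n r k * (twoj_over_n R n k - r) ^+ 2.

From mathcomp Require Import all_boot all_order all_algebra.
From mathcomp Require Import reals.
From mathcomp Require Import ring lra zify.
Set Implicit Arguments. Unset Strict Implicit. Unset Printing Implicit Defensive.
Import Order.TTheory GRing.Theory Num.Theory.
Local Open Scope ring_scope.

(* Put p = (1 + r)/2 and q = (1 - r)/2, so that r = p - q, and let c_k be the
   multiplicity C(n,k) - C(n,k-1) of the spin j = n/2 - k.  Multiplying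
   P_{n,r}(j) by r = p - q telescopes its geometric inner sum, giving
   c_k (q^k p^(n+1-k) - q^(n+1-k) p^k).  Extended to all k = 0..n+1, the sum
   of the first parts is, by Pascal's rule, p E f(K) - q E f(K+1) with
   K ~ Bin(n, q); for the quadratic f(k) = (1 - 2k/n - r)^2 this is exactly
   r times the main term.  Every term added or dropped carries a weight
   q^a p^b with a >= b, a + b = n + 1, and 4pq = 1 - r^2 <= (1 - r^2/2)^2, so
   the error is O(n (1 - r^2/2)^n). *)

Section BinomialExpectation.
Variables (R : comPzRingType) (p q : R).

Definition binom_expect n (g : nat -> R) : R :=
  \sum_(0 <= k < n.+1) 'C(n, k)%:R * (q ^+ k * p ^+ (n - k)) * g k.

Lemma eq_binom_expect n (f g : nat -> R) :
  (forall k, f k = g k) -> binom_expect n f = binom_expect n g.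
Proof. by move=> fg; apply: eq_bigr => k _; rewrite fg. Qed.

Lemma sum_binom_weightsS n g :
  \sum_(0 <= k < n.+2) 'C(n, k)%:R * (q ^+ k * p ^+ (n.+1 - k)) * g k
  = p * binom_expect n g.
Proof.
rewrite big_nat_recr //= bin_small // mul0r mul0r addr0 mulr_sumr.
apply: eq_big_nat => k /andP[_ lt_kn1].
by rewrite subSn // exprS; ring.
Qed.

Lemma sum_binom_weights_shift n g :
  \sum_(0 <= k < n.+1) 'C(n, k)%:R * (q ^+ k.+1 * p ^+ (n.+1 - k.+1)) * g k.+1
  = q * binom_expect n (fun k => g k.+1).
Proof. by rewrite mulr_sumr; apply: eq_bigr => k _; rewrite subSS exprS; ring. Qed.

Lemma binom_expectS n g :
  binom_expect n.+1 g = p * binom_expect n g + q * binom_expect n (fun k => g k.+1).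
Proof.
rewrite -sum_binom_weightsS -sum_binom_weights_shift /binom_expect.
rewrite big_nat_recl // [in RHS]big_nat_recl // !bin0 -addrA; congr (_ + _).
under eq_bigr do rewrite binS natrD !mulrDl.
by rewrite big_split.
Qed.

Hypothesis pq1 : p + q = 1.

Lemma binom_expect_quadratic n a b c :
  binom_expect n (fun k => a + b * k%:R + c * k%:R ^+ 2)
  = a + b * (n%:R * q) + c * (n%:R * p * q + n%:R ^+ 2 * q ^+ 2).
Proof.
elim: n a b c => [|n IHn] a b c.
  by rewrite /binom_expect big_nat1 bin0 subnn !expr0; ring.
rewrite binom_expectS IHn (eq_binom_expect _ (g :=
  (fun k => (a + b + c) + (b + 2 * c) * k%:R + c * k%:R ^+ 2))); last first.
  by move=> k; rewrite -natr1; ring.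
rewrite IHn -natr1 (_ : p = 1 - q); last by rewrite -pq1; ring.
ring.
Qed.

End BinomialExpectation.

Lemma subr_mul_sum_weights (R : comPzRingType) (p q : R) n k : (k <= n - k)%N ->
  (p - q) * \sum_(k <= l < (n - k).+1) q ^+ l * p ^+ (n - l)
  = q ^+ k * p ^+ (n.+1 - k) - q ^+ (n.+1 - k) * p ^+ k.
Proof.
move=> le_k_nk.
rewrite mulr_sumr (telescope_sumr_eq (fun l => - (q ^+ l * p ^+ (n.+1 - l)))).
- have -> : (n - k).+1 = (n.+1 - k)%N by lia.
  by rewrite subKn; [ring | lia].
- by lia.
move=> l /andP[_ lt_l]; rewrite subSS subSn; last by lia.
by rewrite !exprS; ring.
Qed.

Lemma leq_bin_exp2 n k : ('C(n, k) <= 2 ^ n)%N.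
Proof.
elim: n k => [|n IHn] [|k] //=; first by rewrite bin0 expn_gt0.
by rewrite binS expnS mul2n -addnn leq_add.
Qed.

Lemma sqr_mulXX_le (R : numDomainType) (p q : R) a b :
  0 <= q -> q <= p -> (b <= a)%N -> (q ^+ a * p ^+ b) ^+ 2 <= (p * q) ^+ (a + b).
Proof.
move=> q_ge0 le_qp le_ba; have p_ge0 := le_trans q_ge0 le_qp.
rewrite -(subnK le_ba); set d := (a - b)%N.
have -> : (q ^+ (d + b) * p ^+ b) ^+ 2 = (p * q) ^+ (b + b) * (q ^+ d * q ^+ d).
  by rewrite !exprD !exprMn; ring.
have -> : (p * q) ^+ (d + b + b) = (p * q) ^+ (b + b) * (p ^+ d * q ^+ d).
  by rewrite !exprD exprMn; ring.
rewrite ler_wpM2l ?exprn_ge0 ?mulr_ge0 // ler_wpM2r ?exprn_ge0 //.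
by rewrite lerXn2r // nnegrE.
Qed.

Lemma ler_bernoulli (R : numDomainType) (x : R) n : 0 <= x -> 1 + n%:R * x <= (1 + x) ^+ n.
Proof.
move=> x_ge0; elim: n => [|n IHn]; first by rewrite mul0r addr0 expr0.
rewrite exprSr (le_trans _ (ler_wpM2r _ IHn)) ?addr_ge0 //.
by rewrite -natr1 mulrDl mulrDr mul1r mulr1 addrA lerD2l mulrDl mul1r lerDl !mulr_ge0.
Qed.

Lemma linear_geometric_le (R : realFieldType) (d g : R) : 0 < d -> d < g ->
  exists C : R, forall n, n.+2%:R * d ^+ n <= C * g ^+ n.
Proof.
move=> d_gt0 lt_dg; set x := g / d - 1.
have x_gt0 : 0 < x by rewrite subr_gt0 ltr_pdivlMr // mul1r.
have xd : g = (1 + x) * d by rewrite /x; field; rewrite gt_eqF.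
exists (2 + x^-1) => n; rewrite xd exprMn mulrA ler_pM2r ?exprn_gt0 //.
have x_inv_gt0 : 0 < x^-1 by rewrite invr_gt0.
apply: le_trans (ler_wpM2l _ (ler_bernoulli n (ltW x_gt0))); last lra.
have -> : (2 + x^-1) * (1 + n%:R * x) = n.+2%:R + (x^-1 + 2 * n%:R * x).
  by rewrite -addn2 natrD; field; rewrite gt_eqF.
have : 0 <= n%:R * x by rewrite mulr_ge0 // ltW.
by rewrite lerDl; lra.
Qed.

Lemma ler_norm_sum_const (R : numDomainType) (F : nat -> R) (c : R) m M :
  (forall k, (m <= k < M)%N -> `|F k| <= c) ->
  `|\sum_(m <= k < M) F k| <= c *+ (M - m).
Proof.
move=> le_F_c; apply: le_trans (ler_norm_sum _ _ _) _.
by rewrite -sumr_const_nat; apply: ler_sum_nat.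
Qed.

Definition spin_mult (R : realType) n k : R := 'C(n, k)%:R - binom_m1 R n k.

Lemma sum_spin_mult (R : realType) (p q : R) n g :
  \sum_(0 <= k < n.+2) spin_mult R n k * (q ^+ k * p ^+ (n.+1 - k)) * g k
  = p * binom_expect p q n g - q * binom_expect p q n (fun k => g k.+1).
Proof.
under eq_bigr do rewrite mulrBl mulrBl.
rewrite sumrB sum_binom_weightsS -sum_binom_weights_shift.
by rewrite big_nat_recl //= mul0r mul0r add0r.
Qed.

Lemma norm_spin_mult_le (R : realType) n k : `|spin_mult R n k| <= 2 ^+ n.+1.
Proof.
have bin_le : ('C(n, k)%:R : R) <= 2 ^+ n by rewrite -natrX ler_nat leq_bin_exp2.
have /andP[bin_m1_ge0 bin_m1_le] : 0 <= binom_m1 R n k <= 2 ^+ n.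
  case: k {bin_le} => [|k] /=; first by rewrite lexx exprn_ge0.
  by rewrite ler0n -natrX ler_nat leq_bin_exp2.
have bin_ge0 : (0 : R) <= 'C(n, k)%:R by [].
rewrite /spin_mult exprS ler_norml; apply/andP; split; lra.
Qed.

Section SpinDeviation.
Variables (R : realType) (r : R).
Hypotheses (r_gt0 : 0 < r) (r_lt1 : r < 1).
(* [lra] ignores section hypotheses, hence the [move: r_gt0 r_lt1] before it. *)

Let p : R := (1 + r) / 2.
Let q : R := (1 - r) / 2.
Let rho : R := 1 - r ^+ 2 / 2.

Definition devsq n k : R := ((n%:R - 2 * k%:R) / n%:R - r) ^+ 2.

Definition sqdev_main n : R :=
  (1 - r ^+ 2) / n%:R - (2 * (1 - r) / r) * (1 / (n%:R ^+ 2)).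

Lemma sum_spin_mult_devsq n : (0 < n)%N ->
  \sum_(0 <= k < n.+2) spin_mult R n k * (q ^+ k * p ^+ (n.+1 - k)) * devsq n k
  = r * sqdev_main n.
Proof.
move=> n_gt0.
have n_neq0 : n%:R != 0 :> R by rewrite pnatr_eq0 -lt0n.
have r_neq0 : r != 0 by rewrite gt_eqF.
have pq1 : p + q = 1 by rewrite /p /q; field.
have devsq_quad k : devsq n k
    = (1 - r) ^+ 2 + (- 4 * (1 - r) / n%:R) * k%:R + (4 / n%:R ^+ 2) * k%:R ^+ 2.
  by rewrite /devsq; field.
have devsqS_quad k : devsq n k.+1 = (1 - r - 2 / n%:R) ^+ 2
    + (- 4 * (1 - r - 2 / n%:R) / n%:R) * k%:R + (4 / n%:R ^+ 2) * k%:R ^+ 2.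
  by rewrite /devsq -natr1; field.
rewrite sum_spin_mult (eq_binom_expect _ _ _ devsq_quad).
rewrite (eq_binom_expect _ _ _ devsqS_quad) !binom_expect_quadratic //.
by rewrite /sqdev_main /p /q; field; rewrite r_neq0 n_neq0.
Qed.

Lemma r_mul_sqdev n : r * sqdev n r = \sum_(0 <= k < (n./2).+1)
  spin_mult R n k * (q ^+ k * p ^+ (n.+1 - k) - q ^+ (n.+1 - k) * p ^+ k) * devsq n k.
Proof.
rewrite /sqdev mulr_sumr; apply: eq_big_nat => k /andP[_ lt_k_half].
have le_2k_n : (2 * k <= n)%N by rewrite -divn2 in lt_k_half; lia.
have pq_r : p - q = r by rewrite /p /q; field.
rewrite /Pnr /twoj_over_n -/p -/q -(subr_mul_sum_weights p q) ?pq_r; last by lia.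
by rewrite /spin_mult /devsq natrB // natrM; ring.
Qed.

Lemma devsq_le n k : (0 < n)%N -> (k <= n.+1)%N -> devsq n k <= 16.
Proof.
move=> n_gt0 le_k_n1.
have n_pos : (0 : R) < n%:R by rewrite ltr0n.
have k_le : (k%:R : R) / n%:R <= 2 by rewrite ler_pdivrMr // mulrC -natrM ler_nat; lia.
have k_ge0 : (0 : R) <= k%:R / n%:R by rewrite divr_ge0 // ltW.
have -> : devsq n k = (1 - 2 * (k%:R / n%:R) - r) ^+ 2.
  by rewrite /devsq; congr (_ ^+ 2); field; rewrite gt_eqF.
move: (k%:R / n%:R : R) k_le k_ge0 => y y_le y_ge0.
rewrite -subr_ge0 (_ : 16 - _ = (3 + 2 * y + r) * (5 - 2 * y - r)); last by ring.
by rewrite mulr_ge0 //; move: r_gt0 r_lt1; lra.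
Qed.

Lemma scaled_weight_le n a b : (b <= a)%N -> (a + b = n.+1)%N ->
  2 ^+ n.+1 * (q ^+ a * p ^+ b) <= rho ^+ n.
Proof.
move=> le_ba sum_ab.
have r2_le1 : r ^+ 2 <= 1 by rewrite expr_le1 // ltW.
have [q_ge0 le_qp] : 0 <= q /\ q <= p by rewrite /q /p; split; move: r_gt0 r_lt1; lra.
have p_ge0 := le_trans q_ge0 le_qp.
have [rho_ge0 rho_le1] : 0 <= rho /\ rho <= 1 by rewrite /rho; split; move: (sqr_ge0 r); lra.
have pq4_eq : 2 ^+ 2 * (p * q) = rho ^+ 2 - (r ^+ 2 / 2) ^+ 2 by rewrite /p /q /rho; field.
have pq4_ge0 : 0 <= 2 ^+ 2 * (p * q) by rewrite mulr_ge0 ?exprn_ge0 ?(mulr_ge0 p_ge0).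
have w_ge0 : 0 <= 2 ^+ n.+1 * (q ^+ a * p ^+ b).
  by rewrite mulr_ge0 ?exprn_ge0 // (mulr_ge0 (exprn_ge0 _ q_ge0) (exprn_ge0 _ p_ge0)).
apply: le_trans (ler_wiXn2l rho_ge0 rho_le1 (leqnSn n)).
rewrite -(@ler_pXn2r _ 2) ?nnegrE ?exprn_ge0 //.
rewrite exprMn (le_trans (ler_wpM2l _ (sqr_mulXX_le q_ge0 le_qp le_ba))) ?exprn_ge0 //.
rewrite sum_ab -!exprM ![(n.+1 * 2)%N]mulnC !exprM -exprMn lerXn2r ?nnegrE ?exprn_ge0 //.
by rewrite pq4_eq lerBlDr lerDl sqr_ge0.
Qed.

Lemma tail_term_le n k a b : (0 < n)%N -> (k <= n.+1)%N ->
  (b <= a)%N -> (a + b = n.+1)%N ->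
  `|spin_mult R n k * (q ^+ a * p ^+ b) * devsq n k| <= 16 * rho ^+ n.
Proof.
move=> n_gt0 le_k_n1 le_ba sum_ab.
have w_ge0 : 0 <= q ^+ a * p ^+ b.
  by rewrite mulr_ge0 // exprn_ge0 // /q /p; move: r_gt0 r_lt1; lra.
have devsq_ge0 : 0 <= devsq n k := sqr_ge0 _.
rewrite 2!normrM (ger0_norm w_ge0) (ger0_norm devsq_ge0) mulrC.
rewrite ler_pM ?devsq_le ?(mulr_ge0 (normr_ge0 _) w_ge0) //.
apply: le_trans (scaled_weight_le le_ba sum_ab).
by rewrite ler_wpM2r ?norm_spin_mult_le.
Qed.

Lemma sqdev_main_error n : (0 < n)%N ->
  `|sqdev n r - sqdev_main n| <= 16 * n.+2%:R * rho ^+ n / r.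
Proof.
move=> n_gt0.
have le_half : (n./2.+1 <= n.+2)%N by rewrite -divn2; lia.
pose E1 := \sum_(0 <= k < (n./2).+1) spin_mult R n k * (q ^+ (n.+1 - k) * p ^+ k) * devsq n k.
pose E2 := \sum_((n./2).+1 <= k < n.+2) spin_mult R n k * (q ^+ k * p ^+ (n.+1 - k)) * devsq n k.
have err_eq : sqdev n r - sqdev_main n = - (E1 + E2) / r.
  apply: (mulfI (lt0r_neq0 r_gt0)); rewrite mulrCA divff ?gt_eqF // mulr1.
  rewrite mulrBr r_mul_sqdev -sum_spin_mult_devsq // (big_cat_nat _ le_half) //=.
  under eq_bigr do rewrite mulrBr mulrBl.
  by rewrite sumrB /E1 /E2; ring.
have E1_le : `|E1| <= 16 * rho ^+ n *+ n./2.+1.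
  apply: ler_norm_sum_const => k /andP[_ lt_k]; rewrite -divn2 in lt_k.
  by apply: tail_term_le; lia.
have E2_le : `|E2| <= 16 * rho ^+ n *+ (n.+2 - n./2.+1).
  apply: ler_norm_sum_const => k /andP[gt_k lt_k]; rewrite -divn2 in gt_k.
  by apply: tail_term_le; lia.
rewrite err_eq normrM normrN normfV (gtr0_norm r_gt0) ler_pM2r ?invr_gt0 //.
rewrite mulrAC mulr_natr -(subnKC le_half) mulrnDr.
by apply: le_trans (ler_normD _ _) _; apply: lerD.
Qed.

End SpinDeviation.

Theorem mainTheorem11 (R : realType) (r : R) (hr0 : 0 < r) (hr1 : r < 1) :
  exists gamma : R, [/\ 0 < gamma, gamma < 1 &
    exists (C : R) (N : nat), forall n : nat, (N <= n)%N ->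
      `| sqdev n r
         - ((1 - r ^+ 2) / n%:R - (2 * (1 - r) / r) * (1 / (n%:R ^+ 2))) |
      <= C * gamma ^+ n].
Proof.
set rho := 1 - r ^+ 2 / 2.
have [rho_gt0 rho_lt1] : 0 < rho /\ rho < 1.
  have r2_gt0 : 0 < r ^+ 2 by rewrite exprn_gt0.
  have r2_le1 : r ^+ 2 <= 1 by rewrite expr_le1 // ltW.
  by rewrite /rho; split; lra.
set gamma := (1 + rho) / 2.
have rho_lt_gamma : rho < gamma by rewrite /gamma; lra.
have [C linear_le] := linear_geometric_le rho_gt0 rho_lt_gamma.
exists gamma; split; [rewrite /gamma; lra | rewrite /gamma; lra | ].
exists (16 * C / r), 1%N => n n_gt0.
apply: le_trans (sqdev_main_error hr0 hr1 n_gt0) _; rewrite -/rho.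
rewrite (_ : 16 * _ * _ / r = 16 / r * (n.+2%:R * rho ^+ n)); last by ring.
rewrite (_ : 16 * C / r * _ = 16 / r * (C * gamma ^+ n)); last by ring.
by apply: ler_wpM2l; [rewrite divr_ge0 // ltW | apply: linear_le].
Qed.
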